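(* Let $r\ge 1$ be real and $n\ge1$ an integer. Then $$\frac{n}{n+1}\left(1+\frac{1}{n(n+2)}\right)^{1/r}\le \left(\frac{(n+1)\sum_{i=1}^{n} i^r}{n\sum_{i=1}^{n+1} i^r}\right)^{1/r}\le \frac{n}{n+1}\left(1+\frac{(n+1)^{r+1}-\sum_{i=1}^{n+1} i^r}{n^2\sum_{i=1}^{n+1} i^r}\right)^{1/r}.$$ If $0<r\le 1$, both inequalities hold with $\le$ replaced by $\ge$. *)

From Stdlib Require Import Reals.
Open Scope R_scope.

(* powsum n r = sum_{i=1}^{n} i^r  (real exponent r; i >= 1 so Rpower is the usual power) *)
Fixpoint powsum (n : nat) (r : R) : R :=
  match n with
  | O => 0
  | S m => powsum m r + Rpower (INR (S m)) r
  end.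

Definition mid (n : nat) (r : R) : R :=
  Rpower ((INR n + 1) * powsum n r / (INR n * powsum (S n) r)) (/ r).

Definition lowb (n : nat) (r : R) : R :=
  INR n / (INR n + 1) * Rpower (1 + / (INR n * (INR n + 2))) (/ r).

Definition uppb (n : nat) (r : R) : R :=
  INR n / (INR n + 1) *
  Rpower (1 + (Rpower (INR n + 1) (r + 1) - powsum (S n) r)
                / (INR n ^ 2 * powsum (S n) r)) (/ r).

(* Write N = n, a = n^r, b = (n+1)^r.  Raising everything to the power r and
   using (n/(n+1))^r = a/b, the two bounds of the corollary become, after
   clearing denominators, the polynomial inequalities
     (N+1) a S_(n+1) <= b (N+2) S_n        and     N b (S_n - a) <= (N-1) a S_n
   for r >= 1 (and the reverse ones for 0 < r <= 1).

   Both regimes are handled at once through a boolean [convex]: [regime]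
   says that x |-> x^r is convex (r >= 1) or concave (0 < r <= 1) and
   [oriented] is <= or >= accordingly.  The only analytic input is the
   Bernoulli (tangent line) inequality for x^r, which yields a two-point
   Jensen inequality.  Each of the two polynomial inequalities is the last
   stage of an induction on the number of terms of S_n whose step is one
   instance of that Jensen inequality.  The corollary then follows by
   monotonicity of x |-> x^(1/r). *)

From Stdlib Require Import Reals Lra Lia Psatz.
Open Scope R_scope.

Definition oriented (convex : bool) (x y : R) : Prop :=
  if convex then x <= y else y <= x.

Definition regime (convex : bool) (r : R) : Prop :=
  if convex then 1 <= r else 0 < r <= 1.

Lemma regime_pos (c : bool) (r : R) : regime c r -> 0 < r.
Proof. destruct c; cbn [regime]; lra. Qed.

Lemma oriented_scale (c : bool) (k x y : R) :
  0 <= k -> oriented c x y -> oriented c (k * x) (k * y).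
Proof.
  intros hk h; destruct c; cbn [oriented] in *; apply Rmult_le_compat_l; assumption.
Qed.

Lemma oriented_frac (c : bool) (x y u v : R) :
  0 < y -> 0 < v -> oriented c (x * v) (u * y) -> oriented c (x / y) (u / v).
Proof.
  intros hy hv h.
  assert (hyv : 0 <= / (y * v)) by (left; apply Rinv_0_lt_compat; nra).
  replace (x / y) with (/ (y * v) * (x * v)) by (field; lra).
  replace (u / v) with (/ (y * v) * (u * y)) by (field; lra).
  exact (oriented_scale c _ _ _ hyv h).
Qed.

Lemma oriented_Rpower (c : bool) (x y s : R) :
  0 < x -> 0 < y -> 0 < s -> oriented c x y -> oriented c (Rpower x s) (Rpower y s).
Proof. destruct c; cbn [oriented]; intros; apply Rle_Rpower_l; lra. Qed.

(* Rpower x y is exp (y ln x), hence always positive. *)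
Lemma Rpower_pos (x y : R) : 0 < Rpower x y.
Proof. apply exp_pos. Qed.

Lemma Rpower_1_base (r : R) : Rpower 1 r = 1.
Proof. unfold Rpower; rewrite ln_1, Rmult_0_r; exact exp_0. Qed.

Lemma scaled_root (x y r : R) :
  0 < x -> 0 < y -> 0 < r -> x * Rpower y (/ r) = Rpower (Rpower x r * y) (/ r).
Proof.
  intros hx hy hr.
  rewrite <- Rpower_mult_distr by (apply Rpower_pos || exact hy).
  rewrite Rpower_mult, Rinv_r, Rpower_1 by lra; reflexivity.
Qed.

(* Concave Bernoulli inequality s^p <= 1 + p (s - 1) for 0 < p <= 1: with
   m = p ln s, apply exp t >= 1 + t at t = ln s - m and t = -m, and take the
   convex combination with weights p and 1 - p. *)
Lemma concave_bernoulli (p s : R) : 0 < p <= 1 -> 0 < s -> Rpower s p <= 1 + p * (s - 1).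
Proof.
  intros [hp0 hp1] hs. unfold Rpower.
  set (m := p * ln s).
  assert (split_s : s = exp m * exp (ln s - m)).
  { rewrite <- exp_plus, Rplus_minus, exp_ln; [reflexivity | exact hs]. }
  assert (split_1 : 1 = exp m * exp (- m)).
  { rewrite <- exp_plus, Rplus_opp_r, exp_0; reflexivity. }
  pose proof (exp_ineq1_le (ln s - m)) as tangent_s.
  pose proof (exp_ineq1_le (- m)) as tangent_1.
  pose proof (exp_pos m).
  assert (exp m * (1 + (ln s - m)) <= s) by (rewrite split_s at 2; nra).
  assert (exp m * (1 + - m) <= 1) by (rewrite split_1 at 2; nra).
  assert (p * (exp m * (1 + (ln s - m))) + (1 - p) * (exp m * (1 + - m)) = exp m)
    by (unfold m; ring).
  nra.
Qed.

(* Bernoulli inequality in both regimes; the convex case follows from the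
   concave one applied to the exponent 1/r and the base t^r. *)
Lemma bernoulli (c : bool) (r t : R) :
  regime c r -> 0 < t -> oriented c (1 + r * (t - 1)) (Rpower t r).
Proof.
  destruct c; cbn [oriented regime]; intros hr ht; [| exact (concave_bernoulli r t hr ht)].
  assert (hinv : 0 < / r <= 1).
  { split; [apply Rinv_0_lt_compat; lra |].
    rewrite <- Rinv_1. apply Rinv_le_contravar; lra. }
  pose proof (concave_bernoulli (/ r) (Rpower t r) hinv (Rpower_pos _ _)) as h.
  rewrite Rpower_mult, Rinv_r, Rpower_1 in h by lra.
  assert (scaled : r * t <= r * (1 + / r * (Rpower t r - 1)))
    by (apply Rmult_le_compat_l; lra).
  replace (r * (1 + / r * (Rpower t r - 1))) with (r + (Rpower t r - 1)) in scaled
    by (field; lra).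
  lra.
Qed.

Lemma power_tangent (c : bool) (r u v : R) :
  regime c r -> 0 < u -> 0 < v ->
  oriented c (Rpower v r * (1 + r * (u / v - 1))) (Rpower u r).
Proof.
  intros hr hu hv.
  replace (Rpower u r) with (Rpower v r * Rpower (u / v) r)
    by (rewrite Rpower_mult_distr by (apply Rdiv_lt_0_compat || idtac; lra);
        f_equal; field; lra).
  apply oriented_scale; [left; apply Rpower_pos |].
  apply bernoulli; [exact hr | apply Rdiv_lt_0_compat; lra].
Qed.

Lemma power_jensen (c : bool) (r X A B wa wb : R) :
  regime c r -> 0 < X -> 0 < A -> 0 < B -> 0 <= wa -> 0 <= wb ->
  wa * A + wb * B = (wa + wb) * X ->
  oriented c ((wa + wb) * Rpower X r) (wa * Rpower A r + wb * Rpower B r).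
Proof.
  intros hr hX hA hB ha hb hbary.
  assert (tangents_cancel :
    wa * (Rpower X r * (1 + r * (A / X - 1))) + wb * (Rpower X r * (1 + r * (B / X - 1)))
    = (wa + wb) * Rpower X r + r * Rpower X r / X * (wa * A + wb * B - (wa + wb) * X))
    by (field; lra).
  rewrite hbary, Rminus_diag, Rmult_0_r, Rplus_0_r in tangents_cancel.
  rewrite <- tangents_cancel.
  pose proof (oriented_scale c wa _ _ ha (power_tangent c r A X hr hA hX)).
  pose proof (oriented_scale c wb _ _ hb (power_tangent c r B X hr hB hX)).
  destruct c; cbn [oriented regime] in *; lra.
Qed.

(* (x + 1) x^r versus x (x + 1)^r, i.e. monotonicity of x^(r-1). *)
Lemma power_succ_ratio (c : bool) (r x : R) :
  regime c r -> 0 < x -> oriented c ((x + 1) * Rpower x r) (x * Rpower (x + 1) r).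
Proof.
  intros hr hx.
  pose proof (oriented_scale c x _ _ (Rlt_le _ _ hx)
                (power_tangent c r (x + 1) x hr ltac:(lra) hx)) as h.
  replace (x * (Rpower x r * (1 + r * ((x + 1) / x - 1))))
    with (Rpower x r * (x + r)) in h by (field; lra).
  pose proof (Rpower_pos x r).
  destruct c; cbn [oriented regime] in *; nra.
Qed.

Lemma powsum_succ (k : nat) (r : R) :
  powsum (S k) r = powsum k r + Rpower (INR k + 1) r.
Proof. cbn [powsum]; rewrite S_INR; reflexivity. Qed.

Lemma powsum_pos (n : nat) (r : R) : (1 <= n)%nat -> 0 < powsum n r.
Proof.
  intros hn. induction n as [| n IH]; [lia |].
  rewrite powsum_succ. pose proof (Rpower_pos (INR n + 1) r).
  destruct n as [| n]; [cbn [powsum]; lra |].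
  specialize (IH ltac:(lia)). lra.
Qed.

Section PowerSums.

Variables (c : bool) (r : R).
Hypothesis hr : regime c r.

(* The step k -> k+1 is Jensen at n(k+2) with weights k+2, n-k-1 on the
   points (n+1)(k+1), (n+1)(k+2). *)
Lemma lower_partial (n k : nat) :
  (1 <= n)%nat -> (k <= n)%nat ->
  oriented c ((INR n + 1) * Rpower (INR n) r * powsum (S k) r)
    (Rpower (INR n + 1) r *
       ((INR n + 2) * powsum k r + (INR n - INR k) * Rpower (INR k + 1) r)).
Proof.
  intros hn. assert (hN : 1 <= INR n) by (apply (le_INR 1); exact hn).
  induction k as [| k IH]; intros hk.
  - cbn [powsum INR]. rewrite !Rplus_0_l, Rpower_1_base.
    pose proof (power_succ_ratio c r (INR n) hr ltac:(lra)).
    destruct c; cbn [oriented regime] in *; lra.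
  - specialize (IH ltac:(lia)).
    rewrite !powsum_succ, S_INR in *.
    assert (hK : INR k + 1 <= INR n) by (rewrite <- S_INR; apply le_INR; lia).
    pose proof (pos_INR k).
    pose proof (power_jensen c r (INR n * (INR k + 1 + 1))
      ((INR n + 1) * (INR k + 1)) ((INR n + 1) * (INR k + 1 + 1))
      (INR k + 1 + 1) (INR n - (INR k + 1)) hr
      ltac:(nra) ltac:(nra) ltac:(nra) ltac:(lra) ltac:(lra) ltac:(ring)) as jensen.
    rewrite <- !Rpower_mult_distr in jensen by lra.
    destruct c; cbn [oriented regime] in *; nra.
Qed.

Lemma lower_key (n : nat) :
  (1 <= n)%nat ->
  oriented c ((INR n + 1) * Rpower (INR n) r * powsum (S n) r)
    (Rpower (INR n + 1) r * (INR n + 2) * powsum n r).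
Proof.
  intros hn. pose proof (lower_partial n n hn (le_n n)) as h.
  rewrite Rminus_diag, Rmult_0_l, Rplus_0_r, <- Rmult_assoc in h; exact h.
Qed.

(* The step k -> k+1 is Jensen at (k+1)(m+2) with weights m-k, k+1 on the
   points (k+1)(m+1), (k+2)(m+1). *)
Lemma upper_partial (m k : nat) :
  (k <= m)%nat ->
  oriented c (INR (S m) * Rpower (INR (S m) + 1) r * powsum k r)
    (Rpower (INR (S m)) r * (INR m * powsum k r + INR k * Rpower (INR k + 1) r)).
Proof.
  induction k as [| k IH]; intros hk.
  - cbn [powsum INR]; destruct c; cbn [oriented regime]; lra.
  - specialize (IH ltac:(lia)).
    rewrite powsum_succ, !S_INR in *.
    assert (hK : INR k + 1 <= INR m) by (rewrite <- S_INR; apply le_INR; lia).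
    pose proof (pos_INR k).
    pose proof (power_jensen c r ((INR k + 1) * (INR m + 1 + 1))
      ((INR k + 1) * (INR m + 1)) ((INR k + 1 + 1) * (INR m + 1))
      (INR m - INR k) (INR k + 1) hr
      ltac:(nra) ltac:(nra) ltac:(nra) ltac:(lra) ltac:(lra) ltac:(ring)) as jensen.
    rewrite <- !Rpower_mult_distr in jensen by lra.
    destruct c; cbn [oriented regime] in *; nra.
Qed.

Lemma upper_key (n : nat) :
  (1 <= n)%nat ->
  oriented c (INR n * Rpower (INR n + 1) r * (powsum n r - Rpower (INR n) r))
    ((INR n - 1) * Rpower (INR n) r * powsum n r).
Proof.
  intros hn. destruct n as [| m]; [lia |].
  pose proof (upper_partial m m (le_n m)) as h.
  rewrite powsum_succ, S_INR in *.
  replace (INR m + 1 - 1) with (INR m) by ring.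
  destruct c; cbn [oriented regime] in *; nra.
Qed.

End PowerSums.

Lemma Rpower_ratio (n : nat) (r : R) :
  (1 <= n)%nat ->
  Rpower (INR n / (INR n + 1)) r = Rpower (INR n) r / Rpower (INR n + 1) r.
Proof.
  intros hn. assert (hN : 1 <= INR n) by (apply (le_INR 1); exact hn).
  pose proof (Rpower_pos (INR n + 1) r).
  apply (Rmult_eq_reg_l (Rpower (INR n + 1) r)); [| lra].
  rewrite Rpower_mult_distr by (lra || apply Rdiv_lt_0_compat; lra).
  replace ((INR n + 1) * (INR n / (INR n + 1))) with (INR n) by (field; lra).
  field; lra.
Qed.

(* Lower bound: with N = n, S = S_n, a = n^r, b = (n+1)^r, the r-th powers of
   lowb and mid are (a/b)(N+1)^2/(N(N+2)) and (N+1)S/(N(S+b)); cross-multiplied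
   they compare as N(N+1) times the two sides of [lower_key]. *)
Lemma lower_bound (c : bool) (r : R) (n : nat) :
  regime c r -> (1 <= n)%nat -> oriented c (lowb n r) (mid n r).
Proof.
  intros hr hn. pose proof (regime_pos c r hr) as hr0.
  assert (hN : 1 <= INR n) by (apply (le_INR 1); exact hn).
  pose proof (lower_key c r hr n hn) as key.
  unfold lowb, mid. rewrite powsum_succ in *.
  replace (1 + / (INR n * (INR n + 2))) with ((INR n + 1) ^ 2 / (INR n * (INR n + 2)))
    by (field; lra).
  assert (0 < INR n / (INR n + 1)) by (apply Rdiv_lt_0_compat; lra).
  assert (0 < (INR n + 1) ^ 2 / (INR n * (INR n + 2))) by (apply Rdiv_lt_0_compat; nra).
  rewrite scaled_root, Rpower_ratio by assumption.
  set (N := INR n) in *. set (S := powsum n r) in *.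
  set (a := Rpower N r) in *. set (b := Rpower (N + 1) r) in *.
  assert (0 < S) by apply (powsum_pos n r hn).
  assert (0 < a) by apply Rpower_pos. assert (0 < b) by apply Rpower_pos.
  assert (hlow : 0 < a / b * ((N + 1) ^ 2 / (N * (N + 2)))).
  { apply Rmult_lt_0_compat; [apply Rdiv_lt_0_compat |]; assumption. }
  assert (hmid : 0 < (N + 1) * S / (N * (S + b))) by (apply Rdiv_lt_0_compat; nra).
  apply (oriented_Rpower c _ _ _ hlow hmid (Rinv_0_lt_compat r hr0)).
  replace (a / b * ((N + 1) ^ 2 / (N * (N + 2)))) with ((N + 1) ^ 2 * a / (N * (N + 2) * b))
    by (field; lra).
  apply oriented_frac; [nra | nra |].
  replace ((N + 1) ^ 2 * a * (N * (S + b))) with (N * (N + 1) * ((N + 1) * a * (S + b)))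
    by ring.
  replace ((N + 1) * S * (N * (N + 2) * b)) with (N * (N + 1) * (b * (N + 2) * S)) by ring.
  apply oriented_scale; [nra | exact key].
Qed.

(* Upper bound: since (n+1)^(r+1) = (N+1) b, the r-th power of uppb is
   (a/b)(N^2(S+b) + Nb - S)/(N^2(S+b)); cross-multiplied against that of mid,
   the comparison is N(N+1)(S+b) times [upper_key] plus equal terms. *)
Lemma upper_bound (c : bool) (r : R) (n : nat) :
  regime c r -> (1 <= n)%nat -> oriented c (mid n r) (uppb n r).
Proof.
  intros hr hn. pose proof (regime_pos c r hr) as hr0.
  assert (hN : 1 <= INR n) by (apply (le_INR 1); exact hn).
  pose proof (upper_key c r hr n hn) as key.
  pose proof (powsum_pos n r hn). pose proof (Rpower_pos (INR n) r).
  pose proof (Rpower_pos (INR n + 1) r).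
  unfold uppb, mid. rewrite powsum_succ, Rpower_plus, Rpower_1 by lra.
  set (S := powsum n r) in *. set (b := Rpower (INR n + 1) r) in *.
  replace (1 + (b * (INR n + 1) - (S + b)) / (INR n ^ 2 * (S + b)))
    with ((INR n ^ 2 * (S + b) + INR n * b - S) / (INR n ^ 2 * (S + b))) by (field; nra).
  assert (0 < INR n / (INR n + 1)) by (apply Rdiv_lt_0_compat; lra).
  assert (hN2 : 1 <= INR n ^ 2) by nra.
  assert (0 < (INR n ^ 2 * (S + b) + INR n * b - S) / (INR n ^ 2 * (S + b)))
    by (apply Rdiv_lt_0_compat; nra).
  rewrite scaled_root, Rpower_ratio by assumption.
  set (N := INR n) in *. set (a := Rpower N r) in *. fold b.
  assert (hmid : 0 < (N + 1) * S / (N * (S + b))) by (apply Rdiv_lt_0_compat; nra).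
  assert (hupp : 0 < a / b * ((N ^ 2 * (S + b) + N * b - S) / (N ^ 2 * (S + b)))).
  { apply Rmult_lt_0_compat; [apply Rdiv_lt_0_compat |]; assumption. }
  apply (oriented_Rpower c _ _ _ hmid hupp (Rinv_0_lt_compat r hr0)).
  replace (a / b * ((N ^ 2 * (S + b) + N * b - S) / (N ^ 2 * (S + b))))
    with (a * (N ^ 2 * (S + b) + N * b - S) / (b * N ^ 2 * (S + b))) by (field; nra).
  assert (hden : 0 < b * N ^ 2 * (S + b)) by (apply Rmult_lt_0_compat; nra).
  apply oriented_frac; [nra | exact hden |].
  pose proof (oriented_scale c (N * (N + 1) * (S + b)) _ _ ltac:(nra) key) as scaled.
  destruct c; cbn [oriented regime] in *; nra.
Qed.

Theorem corollary2p3 (r : R) (n : nat) (hn : (1 <= n)%nat) :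
  (1 <= r -> lowb n r <= mid n r /\ mid n r <= uppb n r) /\
  (0 < r <= 1 -> lowb n r >= mid n r /\ mid n r >= uppb n r).
Proof.
  split; intros hr.
  - exact (conj (lower_bound true r n hr hn) (upper_bound true r n hr hn)).
  - exact (conj (Rle_ge _ _ (lower_bound false r n hr hn))
                (Rle_ge _ _ (upper_bound false r n hr hn))).
Qed.
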